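(* Let $P$ be a pregroup, $X$ a reduced word of length $n$ in $P$, and $A=(a_1,\dots,a_{n-1})$, $B=(b_1,\dots,b_{n-1})$ words of length $n-1$. If $X\star A$ and $(X\star A)\star B$ are defined, then $AB=(a_1b_1,\dots,a_{n-1}b_{n-1})$ is defined (i.e. each $a_ib_i$ is defined), and $(X\star A)\star B=X\star(AB)$.
   Context: A pregroup consists of a set $P$, an element $1\in P$, a function $P\to P$, $x\mapsto x^{-1}$, a subset $D\subseteq P\times P$, and a function $D\to P$, $(x,y)\mapsto xy$; we say ''$xy$ is defined'' when $(x,y)\in D$. The axioms: (1) for all $x$, $1x$ and $x1$ are defined and $1x=x1=x$; (2) for all $x$, $xx^{-1}$ and $x^{-1}x$ are defined and equal $1$; (3) if $xy$ is defined then $y^{-1}x^{-1}$ is defined and $(xy)^{-1}=y^{-1}x^{-1}$; (4) if $xy$ and $yz$ are defined, then $x(yz)$ is defined iff $(xy)z$ is defined, and then $x(yz)=(xy)z$; (5) if $wx$, $xy$, $yz$ are all defined, then $w(xy)$ is defined or $(xy)z$ is defined. A word of length $n\ge1$ is an $n$-tuple of elements of $P$; $(x_1,\dots,x_n)$ is reduced if for no $i$ is $x_ix_{i+1}$ defined. For a word $X=(x_1,\dots,x_n)$ and a word $A=(a_1,\dots,a_{n-1})$, with $a_0=a_n=1$: if for all $i$ the products $x_ia_i$, $a_{i-1}^{-1}x_i$ and $(a_{i-1}^{-1}x_i)a_i$ are defined, then the interleaving $X\star A$ is defined and equals $(y_1,\dots,y_n)$ with $y_i=(a_{i-1}^{-1}x_i)a_i$.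 For words $A,B$ of length $n-1$, $AB$ is defined when every $a_ib_i$ is defined, and then $AB=(a_1b_1,\dots,a_{n-1}b_{n-1})$. *)

From Stdlib Require Import Arith Lia.

Record pregroup := Pregroup {
  carrier :> Type;
  one : carrier;
  inv : carrier -> carrier;
  mul : carrier -> carrier -> option carrier;
  ax1 : forall x, mul one x = Some x /\ mul x one = Some x;
  ax2 : forall x, mul x (inv x) = Some one /\ mul (inv x) x = Some one;
  ax3 : forall x y xy, mul x y = Some xy -> mul (inv y) (inv x) = Some (inv xy);
  ax4 : forall x y z xy yz, mul x y = Some xy -> mul y z = Some yz ->
          (forall w, mul x yz = Some w <-> mul xy z = Some w) /\
          ((exists w, mul x yz = Some w) <-> (exists w, mul xy z = Some w));
  ax5 : forall w x y z wx xy yz, mul w x = Some wx -> mul x y = Some xy ->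
          mul y z = Some yz ->
          (exists v, mul w xy = Some v) \/ (exists v, mul xy z = Some v)
}.

Section Words.
Variable P : pregroup.

Definition defined (x y : P) : Prop := exists z, mul P x y = Some z.

(* A word of length n is represented by a function x : nat -> P, whose
   relevant entries are x 1, ..., x n (other values are ignored). *)

Definition reduced (n : nat) (X : nat -> P) : Prop :=
  forall i, 1 <= i -> i < n -> ~ defined (X i) (X (S i)).

Definition ext (n : nat) (A : nat -> P) (i : nat) : P :=
  if Nat.eqb i 0 then one P else if Nat.eqb i n then one P else A i.

(* X * A is defined and equals Y (as words of length n) *)
Definition interleave_eq (n : nat) (X A Y : nat -> P) : Prop :=
  forall i, 1 <= i <= n ->
    exists u, mul P (inv P (ext n A (i - 1))) (X i) = Some u /\
    defined (X i) (ext n A i) /\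
    mul P u (ext n A i) = Some (Y i).

Definition interleave_defined (n : nat) (X A : nat -> P) : Prop :=
  exists Y, interleave_eq n X A Y.

Definition prodword_eq (n : nat) (A B C : nat -> P) : Prop :=
  forall i, 1 <= i <= n - 1 -> mul P (A i) (B i) = Some (C i).

End Words.

From Stdlib Require Import Arith Lia.

(* Write x_i = a_(i-1) u_i, so that y_i = u_i a_i.  Axiom (5) applied around
   y_i y_(i+1) shows that X * A is again reduced.  Applied once more, it shows
   that y_i stays right-multipliable by b_i after any left multiplication, and
   left-multipliable by b_(i-1)^-1 after any right multiplication: otherwise
   y_i y_(i+1), resp. y_(i-1) y_i, would be defined.  These two facts are
   exactly what axiom (4) needs to regroup
   b_(i-1)^-1 (a_(i-1)^-1 x_i a_i) b_i  as  (a_(i-1) b_(i-1))^-1 x_i (a_i b_i). *)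

Section Pregroup.
Variable P : pregroup.
Implicit Types a b c p u w x y z : P.

Lemma mul_assoc_l x y z xy yz w :
  mul P x y = Some xy -> mul P y z = Some yz ->
  mul P x yz = Some w -> mul P xy z = Some w.
Proof. intros Hxy Hyz. exact (proj1 (proj1 (ax4 P x y z xy yz Hxy Hyz) w)). Qed.

Lemma mul_assoc_r x y z xy yz w :
  mul P x y = Some xy -> mul P y z = Some yz ->
  mul P xy z = Some w -> mul P x yz = Some w.
Proof. intros Hxy Hyz. exact (proj2 (proj1 (ax4 P x y z xy yz Hxy Hyz) w)). Qed.

Lemma defined_assoc_r x y z xy yz :
  mul P x y = Some xy -> mul P y z = Some yz ->
  defined P xy z -> defined P x yz.
Proof. intros Hxy Hyz [w Hw]. exists w. eapply mul_assoc_r; eauto. Qed.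

Lemma defined_assoc_l x y z xy yz :
  mul P x y = Some xy -> mul P y z = Some yz ->
  defined P x yz -> defined P xy z.
Proof. intros Hxy Hyz [w Hw]. exists w. eapply mul_assoc_l; eauto. Qed.

Lemma mul_one_l_eq x y : mul P (one P) x = Some y -> y = x.
Proof. rewrite (proj1 (ax1 P x)). congruence. Qed.

Lemma mul_one_r_eq x y : mul P x (one P) = Some y -> y = x.
Proof. rewrite (proj2 (ax1 P x)). congruence. Qed.

Lemma inv_involutive x : inv P (inv P x) = x.
Proof.
  assert (H : mul P (one P) (inv P (inv P x)) = Some x).
  { apply (mul_assoc_l x (inv P x) (inv P (inv P x)) (one P) (one P));
      [apply ax2 | apply ax2 | apply ax1]. }
  apply mul_one_l_eq in H. congruence.
Qed.

Lemma inv_one : inv P (one P) = one P.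
Proof. symmetry. apply mul_one_l_eq, ax2. Qed.

Lemma mul_inv_cancel_l x y p : mul P x y = Some p -> mul P (inv P x) p = Some y.
Proof. intro H. eapply mul_assoc_r; [apply ax2 | exact H | apply ax1]. Qed.

Lemma mul_inv_cancel_r x y p : mul P x y = Some p -> mul P p (inv P y) = Some x.
Proof. intro H. eapply mul_assoc_l; [exact H | apply ax2 | apply ax1]. Qed.

Lemma mul_inv_l_transpose a x u : mul P (inv P a) x = Some u -> mul P a u = Some x.
Proof. intro H. rewrite <- (inv_involutive a). exact (mul_inv_cancel_l _ _ _ H). Qed.

Lemma ax5_assoc w x y z wx xy yz :
  mul P w x = Some wx -> mul P x y = Some xy -> mul P y z = Some yz ->
  defined P wx y \/ defined P x yz.
Proof.
  intros Hwx Hxy Hyz.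
  destruct (ax5 P w x y z wx xy yz Hwx Hxy Hyz) as [[v Hv] | [v Hv]].
  - left. exists v. eapply mul_assoc_l; eauto.
  - right. exists v. eapply mul_assoc_r; eauto.
Qed.

Lemma reduced_triple_prefix x y z a p :
  ~ defined P x y -> ~ defined P y z ->
  mul P p a = Some y -> defined P a z -> ~ defined P x p.
Proof.
  intros Hxy Hyz Hpa [az Haz] [xp Hxp].
  destruct (ax5 P x p a z xp y az Hxp Hpa Haz); contradiction.
Qed.

Lemma reduced_triple_suffix x y z a u :
  ~ defined P x y -> ~ defined P y z ->
  defined P x a -> mul P a u = Some y -> ~ defined P u z.
Proof.
  intros Hxy Hyz [xa Hxa] Hau [uz Huz].
  destruct (ax5 P x a u z xa y uz Hxa Hau Huz); contradiction.
Qed.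

Definition interleave_at a x b y : Prop :=
  exists u, mul P (inv P a) x = Some u /\ defined P x b /\ mul P u b = Some y.

Lemma interleave_at_cell a x b y :
  interleave_at a x b y ->
  exists u p, mul P a u = Some x /\ mul P u b = Some y /\
              mul P x b = Some p /\ mul P a y = Some p.
Proof.
  intros [u [Hu [[p Hp] Hy]]].
  apply mul_inv_l_transpose in Hu.
  exists u, p. repeat split; auto.
  eapply mul_assoc_r; eauto.
Qed.

Lemma interleave_at_mul a a' b b' c c' x y z :
  interleave_at a x a' y -> interleave_at b y b' z ->
  mul P a b = Some c -> mul P a' b' = Some c' ->
  (forall w s, mul P w y = Some s -> defined P s b') ->
  (forall w s, mul P y w = Some s -> defined P (inv P b) s) ->
  interleave_at c x c' z.
Proof.
  intros HXA HYB Hc Hc' Hcompat_l Hcompat_r.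
  destruct (interleave_at_cell _ _ _ _ HXA) as [u [p [Hau [Huy [Hxp Hyp]]]]].
  destruct (interleave_at_cell _ _ _ _ HYB) as [v [r [Hbv [Hvz _]]]].
  destruct (Hcompat_r _ _ (mul_inv_cancel_r _ _ _ Huy)) as [t Ht].
  assert (Htv : mul P t a' = Some v).
  { eapply mul_assoc_l; [exact Ht | exact Huy | exact (mul_inv_cancel_l _ _ _ Hbv)]. }
  exists t. split; [| split].
  - eapply mul_assoc_l;
      [exact (ax3 P _ _ _ Hc) | exact (mul_inv_cancel_l _ _ _ Hau) | exact Ht].
  - eapply defined_assoc_r; [exact Hxp | exact Hc' | exact (Hcompat_l _ _ Hyp)].
  - eapply mul_assoc_r; [exact Htv | exact Hc' | exact Hvz].
Qed.

End Pregroup.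

Section Words.
Variable P : pregroup.
Variable n : nat.

Lemma ext_0 (A : nat -> P) : ext P n A 0 = one P.
Proof. reflexivity. Qed.

Lemma ext_n (A : nat -> P) : ext P n A n = one P.
Proof. unfold ext. destruct (Nat.eqb n 0); [reflexivity |]. now rewrite Nat.eqb_refl. Qed.

Lemma ext_mid (A : nat -> P) i : 1 <= i < n -> ext P n A i = A i.
Proof.
  intro Hi. unfold ext.
  destruct (Nat.eqb_spec i 0); [lia |]. destruct (Nat.eqb_spec i n); [lia |]. reflexivity.
Qed.

(* Letters are indexed from 1, so letter [S k] sits between [ext A k] and [ext A (S k)]. *)
Lemma interleave_eq_iff (X A Y : nat -> P) :
  interleave_eq P n X A Y <->
  forall k, k < n ->
    interleave_at P (ext P n A k) (X (S k)) (ext P n A (S k)) (Y (S k)).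
Proof.
  split.
  - intros H k Hk. specialize (H (S k) ltac:(lia)). simpl in H.
    now rewrite Nat.sub_0_r in H.
  - intros H [|k] Hk; [lia |]. simpl. rewrite Nat.sub_0_r. apply H. lia.
Qed.

Lemma interleave_eq_cell (X A Y : nat -> P) k :
  interleave_eq P n X A Y -> k < n ->
  exists u p,
    mul P (ext P n A k) u = Some (X (S k)) /\ mul P u (ext P n A (S k)) = Some (Y (S k)) /\
    mul P (X (S k)) (ext P n A (S k)) = Some p /\ mul P (ext P n A k) (Y (S k)) = Some p.
Proof. intros H Hk. exact (interleave_at_cell P _ _ _ _ (proj1 (interleave_eq_iff X A Y) H k Hk)). Qed.

Section Reduced.
Variables X A Y : nat -> P.
Hypothesis HX : reduced P n X.
Hypothesis HXA : interleave_eq P n X A Y.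

Lemma reduced_interleave_prefix k p :
  S k < n -> mul P (X (S (S k))) (ext P n A (S (S k))) = Some p ->
  ~ defined P (X (S k)) p.
Proof.
  intros Hk Hp.
  destruct (Nat.eq_dec (S (S k)) n) as [En | En].
  - rewrite En, ext_n in Hp. apply mul_one_r_eq in Hp. subst p.
    rewrite <- En. apply HX; lia.
  - destruct (interleave_eq_cell X A Y (S (S k)) HXA ltac:(lia)) as [u [_ [Hau _]]].
    eapply reduced_triple_prefix; [apply HX; lia | apply HX; lia | |].
    + exact (mul_inv_cancel_r P _ _ _ Hp).
    + exists u. exact (mul_inv_cancel_l P _ _ _ Hau).
Qed.

Lemma reduced_interleave_suffix k u :
  S k < n -> mul P (ext P n A k) u = Some (X (S k)) ->
  ~ defined P u (X (S (S k))).
Proof.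
  intros Hk Hu.
  destruct k as [|k].
  - rewrite ext_0 in Hu. apply mul_one_l_eq in Hu. subst u. apply HX; lia.
  - destruct (interleave_eq_cell X A Y k HXA ltac:(lia)) as [_ [p [_ [_ [Hxp _]]]]].
    apply (reduced_triple_suffix P (X (S k)) (X (S (S k))) _ (ext P n A (S k)));
      [apply HX; lia | apply HX; lia | exists p; exact Hxp | exact Hu].
Qed.

Lemma reduced_interleave : reduced P n Y.
Proof.
  intros [|k] Hk1 Hk [s Hs]; [lia |].
  destruct (interleave_eq_cell X A Y k HXA ltac:(lia)) as [u [p [Hau [Huy [Hxp Hyp]]]]].
  destruct (interleave_eq_cell X A Y (S k) HXA Hk) as [u' [p' [Hau' [Huy' [Hxp' Hyp']]]]].
  destruct (ax5_assoc P _ _ _ _ _ _ _ Hyp Hs (mul_inv_cancel_r P _ _ _ Huy'))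
    as [Hpy | Hyu].
  - apply (reduced_interleave_prefix k p' Hk Hxp').
    eapply defined_assoc_l;
      [exact (mul_inv_cancel_r P _ _ _ Hxp) | exact (mul_inv_cancel_l P _ _ _ Hyp') | exact Hpy].
  - apply (reduced_interleave_suffix k u Hk Hau).
    eapply defined_assoc_r; [exact Huy | exact Hau' | exact Hyu].
Qed.

End Reduced.

Section Compatible.
Variables Y B Z : nat -> P.
Hypothesis HY : reduced P n Y.
Hypothesis HYB : interleave_eq P n Y B Z.

Lemma interleave_compat_l k :
  k < n -> forall w s, mul P w (Y (S k)) = Some s -> defined P s (ext P n B (S k)).
Proof.
  intros Hk w s Hs.
  destruct (Nat.eq_dec (S k) n) as [En | En].
  - rewrite En, ext_n. exists s. apply ax1.
  - destruct (interleave_eq_cell Y B Z k HYB Hk) as [_ [r [_ [_ [Hyr _]]]]].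
    destruct (interleave_eq_cell Y B Z (S k) HYB ltac:(lia)) as [v [_ [Hbv _]]].
    destruct (ax5_assoc P _ _ _ _ _ _ _ Hs Hyr Hbv) as [Hsb | Hyy]; [exact Hsb |].
    exfalso. apply (HY (S k)); [lia | lia | exact Hyy].
Qed.

Lemma interleave_compat_r k :
  k < n -> forall w s, mul P (Y (S k)) w = Some s -> defined P (inv P (ext P n B k)) s.
Proof.
  intros Hk w s Hs.
  destruct k as [|k].
  - rewrite ext_0, inv_one. exists s. apply ax1.
  - destruct (interleave_eq_cell Y B Z k HYB ltac:(lia)) as [_ [r [_ [_ [Hyr _]]]]].
    destruct (interleave_eq_cell Y B Z (S k) HYB Hk) as [v [_ [Hbv _]]].
    destruct (ax5_assoc P _ _ _ _ _ _ _
                (mul_inv_cancel_r P _ _ _ Hyr) (mul_inv_cancel_l P _ _ _ Hbv) Hs)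
      as [Hyy | Hbs]; [| exact Hbs].
    exfalso. apply (HY (S k)); [lia | lia | exact Hyy].
Qed.

Lemma interleave_factors_defined X A :
  interleave_eq P n X A Y -> forall i, 1 <= i <= n - 1 -> defined P (A i) (B i).
Proof.
  intros HXA [|k] Hk; [lia |].
  destruct (interleave_eq_cell X A Y k HXA ltac:(lia)) as [u [_ [_ [Huy _]]]].
  rewrite <- (ext_mid A (S k)), <- (ext_mid B (S k)) by lia.
  exact (interleave_compat_l k ltac:(lia) _ _ (mul_inv_cancel_l P _ _ _ Huy)).
Qed.

End Compatible.

(* Junk value [one] where [a_i b_i] is undefined. *)
Definition word_mul (A B : nat -> P) (i : nat) : P :=
  match mul P (A i) (B i) with Some c => c | None => one P end.

Lemma word_mul_spec (A B : nat -> P) i :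
  defined P (A i) (B i) -> mul P (A i) (B i) = Some (word_mul A B i).
Proof. intros [c Hc]. unfold word_mul. now rewrite Hc. Qed.

Lemma ext_word_mul (A B : nat -> P) :
  (forall i, 1 <= i <= n - 1 -> defined P (A i) (B i)) ->
  forall k, k <= n -> mul P (ext P n A k) (ext P n B k) = Some (ext P n (word_mul A B) k).
Proof.
  intros HAB k Hk.
  destruct (Nat.eq_dec k 0) as [-> | E0]; [rewrite !ext_0; apply ax1 |].
  destruct (Nat.eq_dec k n) as [-> | En]; [rewrite !ext_n; apply ax1 |].
  rewrite !ext_mid by lia. apply word_mul_spec, HAB. lia.
Qed.

End Words.

Theorem mainTheorem9 (P : pregroup) (n : nat) (Hn : 1 <= n)
  (X A B : nat -> P) (Y Z : nat -> P) :
  reduced P n X ->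
  interleave_eq P n X A Y ->
  interleave_eq P n Y B Z ->
  (forall i, 1 <= i <= n - 1 -> defined P (A i) (B i)) /\
  (exists C, prodword_eq P n A B C /\ interleave_eq P n X C Z).
Proof.
  intros HX HXA HYB.
  pose proof (reduced_interleave P n X A Y HX HXA) as HY.
  pose proof (interleave_factors_defined P n Y B Z HY HYB X A HXA) as HAB.
  split; [exact HAB |].
  exists (word_mul P A B). split.
  - intros i Hi. exact (word_mul_spec P A B i (HAB i Hi)).
  - apply interleave_eq_iff. intros k Hk.
    eapply interleave_at_mul.
    + exact (proj1 (interleave_eq_iff P n X A Y) HXA k Hk).
    + exact (proj1 (interleave_eq_iff P n Y B Z) HYB k Hk).
    + apply ext_word_mul; [exact HAB | lia].
    + apply ext_word_mul; [exact HAB | lia].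
    + exact (interleave_compat_l P n Y B Z HY HYB k Hk).
    + exact (interleave_compat_r P n Y B Z HY HYB k Hk).
Qed.
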